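(* Let $X=\{x_j:j\in J\}\subset\mathbb{R}^2$ be finite with quadratic min-power centre $s^*$ and centroid $M$, and let $r\in J$ be such that $x_r$ is a point of $X$ farthest from $M$. If $s^*\in\mathrm{int}(V(x_j))$ for some $j\in J$, then $s^*=M_r$.
   Context: $n=|J|$; $s^*$ is the unique minimiser of $P(s)=\sum_{i\in J}\|s-x_i\|^2+\max_{i\in J}\|s-x_i\|^2$; $M=\frac1n\sum_ix_i$; $M_j=\frac{1}{n+1}\big(x_j+\sum_{i\in J}x_i\big)$; $V(x_j)=\{s:\|s-x_j\|=\max_{i\in J}\|s-x_i\|\}$ and $\mathrm{int}$ denotes its interior. *)

From HB Require Import structures.
From mathcomp Require Import all_boot all_order all_algebra.
Set Implicit Arguments. Unset Strict Implicit. Unset Printing Implicit Defensive.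
Import Order.TTheory GRing.Theory Num.Theory.
Local Open Scope ring_scope.

Section Defs.
Variable R : rcfType.
Definition pt := (R * R)%type.

Definition dist2 (s x : pt) : R := (s.1 - x.1) ^+ 2 + (s.2 - x.2) ^+ 2.
Definition dist (s x : pt) : R := Num.sqrt (dist2 s x).

Variable J : finType.
Variable x : J -> pt.

(* P(s) = sum_i ||s - x_i||^2 + max_i ||s - x_i||^2  (distances are >= 0, so 0 is a
   neutral start for the max) *)
Definition Pfun (s : pt) : R :=
  \sum_(i : J) dist2 s (x i) + \big[Num.max/0]_(i : J) dist2 s (x i).

Definition min_power_centre (s : pt) : Prop := forall t, Pfun s <= Pfun t.

Definition centroid : pt :=
  ((\sum_(i : J) (x i).1) / #|J|%:R, (\sum_(i : J) (x i).2) / #|J|%:R).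

Definition Mj (j : J) : pt :=
  (((x j).1 + \sum_(i : J) (x i).1) / (#|J|.+1)%:R,
   ((x j).2 + \sum_(i : J) (x i).2) / (#|J|.+1)%:R).

Definition Vcell (j : J) (s : pt) : Prop :=
  dist s (x j) = \big[Num.max/0]_(i : J) dist s (x i).

Definition in_interior (A : pt -> Prop) (s : pt) : Prop :=
  exists2 e : R, 0 < e & forall t, dist t s < e -> A t.
End Defs.

From HB Require Import structures.
From mathcomp Require Import all_boot all_order all_algebra.
From mathcomp Require Import ring lra.
Import Order.TTheory GRing.Theory Num.Theory.
Local Open Scope ring_scope.

(* In the interior of V(x_j) the max term of P is ||s - x_j||^2, so near s*
   P coincides with sum_i ||s - x_i||^2 + ||s - x_j||^2 = (n+1) ||s - M_j||^2
   + const, and a local minimiser of this quadratic is its centre: s* = M_j.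
   As M_j lies in V(x_j), x_r is no farther from M_j than x_j.  Now M_j is the
   barycentre of M (weight n) and x_j, and the identity
     (n+1) (||M_j - x_r||^2 - ||M_j - x_j||^2)
       = ||x_j - x_r||^2 + n (||M - x_r||^2 - ||M - x_j||^2)
   together with the choice of x_r forces x_j = x_r, whence s* = M_r. *)

Section Plane.
Context {R : rcfType}.
Implicit Types (p q s t m c : pt R) (e n : R).

Lemma dist2_ge0 p q : 0 <= dist2 p q.
Proof. by rewrite addr_ge0 ?sqr_ge0. Qed.

Lemma dist2xx p : dist2 p p = 0.
Proof. by rewrite /dist2 !subrr expr0n addr0. Qed.

Lemma dist2_eq0 p q : (dist2 p q == 0) = (p == q).
Proof.
rewrite paddr_eq0 ?sqr_ge0 // !sqrf_eq0 !subr_eq0.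
by case: p q => [p1 p2] [q1 q2]; rewrite xpair_eqE.
Qed.

Lemma ler_dist s p q : (dist s p <= dist s q) = (dist2 s p <= dist2 s q).
Proof. by rewrite ler_sqrt ?dist2_ge0. Qed.

Lemma ltr_dist p q e : 0 < e -> (dist p q < e) = (dist2 p q < e ^+ 2).
Proof.
by move=> e0; rewrite /dist -{1}(ger0_norm (ltW e0)) -sqrtr_sqr ltr_sqrt ?exprn_gt0.
Qed.

(* Moving from [s] a fraction [h] of the way to [m] scales [dist2 _ m] by
   [(1 - h)^2] while moving only [h^2 * dist2 s m] in [dist2 _ s]. *)
Lemma dist2_local_min_eq s m e : 0 < e ->
  (forall t, dist2 t s < e -> dist2 s m <= dist2 t m) -> s = m.
Proof.
move=> e0 smin; apply/eqP; rewrite -dist2_eq0; apply: contraT => d_neq0.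
set d := dist2 s m.
have d0 : 0 < d by rewrite lt_def d_neq0 dist2_ge0.
set h := e / (e + d).
have ed0 : 0 < e + d by rewrite addr_gt0.
have h0 : 0 < h by rewrite divr_gt0.
have h1 : h < 1 by rewrite ltr_pdivrMr // mul1r; lra.
have hd : h * d < e by rewrite mulrAC ltr_pdivrMr //; nra.
pose t : pt R := (s.1 + h * (m.1 - s.1), s.2 + h * (m.2 - s.2)).
have dts : dist2 t s = h ^+ 2 * d by rewrite /d /dist2 /=; ring.
have dtm : dist2 t m = (1 - h) ^+ 2 * d by rewrite /d /dist2 /=; ring.
have ts : dist2 t s < e by rewrite dts expr2; nra.
have := smin t ts; rewrite dtm leNgt gtr_pMl // => /negbTE <-.
nra.
Qed.

Definition barycentre n c p : pt R :=
  ((n * c.1 + p.1) / (n + 1), (n * c.2 + p.2) / (n + 1)).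

Lemma barycentre_farther_eq n c p q : 0 <= n ->
  dist2 (barycentre n c p) q <= dist2 (barycentre n c p) p ->
  dist2 c p <= dist2 c q -> p = q.
Proof.
move=> n0 mq cp; apply/eqP; rewrite -dist2_eq0 eq_le dist2_ge0 andbT.
set m := barycentre n c p in mq *.
have n1 : n + 1 != 0 by rewrite gt_eqF //; lra.
have expand : (n + 1) * (dist2 m q - dist2 m p)
              = dist2 p q + n * (dist2 c q - dist2 c p).
  by rewrite /m /dist2 /=; field.
have : (n + 1) * (dist2 m q - dist2 m p) <= 0 by apply: mulr_ge0_le0; lra.
have : 0 <= n * (dist2 c q - dist2 c p) by rewrite mulr_ge0 // subr_ge0.
rewrite expand; lra.
Qed.

End Plane.

Section PointCloud.
Context {R : rcfType} {J : finType} {x : J -> pt R}.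
Implicit Types (s t : pt R).

Lemma sum_sqrB (a : R) (g : J -> R) :
  \sum_i (a - g i) ^+ 2 = #|J|%:R * a ^+ 2 - 2 * a * \sum_i g i + \sum_i g i ^+ 2.
Proof.
transitivity (\sum_i (a ^+ 2 - 2 * a * g i + g i ^+ 2)).
  by apply: eq_bigr => i _; ring.
rewrite big_split /= sumrB sumr_const -mulr_sumr (eq_card (B := J)) //.
by rewrite -mulr_natl; ring.
Qed.

(* [P] on the cell [V(x_j)], where its max term is [dist2 t (x j)]. *)
Definition Pcell (j : J) t : R := \sum_i dist2 t (x i) + dist2 t (x j).

Lemma Pcell_Mj (j : J) t :
  Pcell j t = Pcell j (Mj x j) + (#|J|.+1)%:R * dist2 t (Mj x j).
Proof.
rewrite /Pcell /dist2 !big_split /= !sum_sqrB /Mj /= -(natr1 #|J|).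
have n1 : #|J|%:R + 1 != 0 :> R by rewrite gt_eqF // ltr_wpDl.
by field.
Qed.

Lemma Vcell_dist2 (j i : J) t : Vcell x j t -> dist2 t (x i) <= dist2 t (x j).
Proof. by rewrite -ler_dist => ->; apply: le_bigmax. Qed.

Lemma Pfun_Vcell (j : J) t : Vcell x j t -> Pfun x t = Pcell j t.
Proof.
move=> tV; congr (_ + _); apply/le_anti/andP; split.
  by apply: bigmax_le => [|i _]; [exact: dist2_ge0 | exact: Vcell_dist2].
exact: le_bigmax.
Qed.

Lemma interior_min_power_centre (j : J) s :
  min_power_centre x s -> in_interior (Vcell x j) s -> s = Mj x j.
Proof.
move=> smin [e e0 sV].
have Pcell_near t : dist2 t s < e ^+ 2 -> Pfun x t = Pcell j t.
  by rewrite -ltr_dist // => /sV /Pfun_Vcell.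
apply: (@dist2_local_min_eq _ _ _ (e ^+ 2)) => [|t ts]; first exact: exprn_gt0.
have ss : dist2 s s < e ^+ 2 by rewrite dist2xx exprn_gt0.
have := smin t; rewrite (Pcell_near s ss) (Pcell_near t ts).
by rewrite [Pcell j s]Pcell_Mj [Pcell j t]Pcell_Mj lerD2l ler_pM2l ?ltr0Sn.
Qed.

Lemma Mj_barycentre (j : J) : (0 < #|J|)%N ->
  Mj x j = barycentre #|J|%:R (centroid x) (x j).
Proof.
move=> J0; have n0 : #|J|%:R != 0 :> R by rewrite pnatr_eq0 -lt0n.
have n1 : #|J|%:R + 1 != 0 :> R by rewrite natr1 pnatr_eq0.
rewrite /Mj /barycentre /centroid /= -(natr1 #|J|).
by congr (_, _); field; rewrite n0 n1.
Qed.

End PointCloud.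

Theorem corollary1 (R : rcfType) (J : finType) (x : J -> pt R) (sstar : pt R) (r : J) :
  min_power_centre x sstar ->
  (forall i : J, dist (centroid x) (x i) <= dist (centroid x) (x r)) ->
  (exists j : J, in_interior (Vcell x j) sstar) ->
  sstar = Mj x r.
Proof.
move=> smin rfar [j sj].
have sMj := interior_min_power_centre _ _ smin sj.
have J0 : (0 < #|J|)%N by apply/card_gt0P; exists r.
suff xjr : x j = x r by rewrite sMj /Mj xjr.
apply: (@barycentre_farther_eq R _ (centroid x) _ _ (ler0n _ #|J|)); last by rewrite -ler_dist.
rewrite -Mj_barycentre // -sMj; apply: Vcell_dist2.
by case: sj => e e0; apply; rewrite ltr_dist // dist2xx exprn_gt0.
Qed.
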